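(* Let $\Sigma$ be a theory and let $A,B \subseteq \mathcal{T}_Y$ be finite. Then the following are equivalent: (1) $\Sigma \cup \{\emptyset \Rightarrow A\} \vdash \emptyset \Rightarrow B$; (2) there are $i_1,\ldots,i_n \in \mathbb{Z}$ such that $\Sigma \vdash \bigcup_{m=1}^n (A+i_m) \Rightarrow B$.
   Context: $Y$ is a non-empty finite set of attributes and $\mathcal{T}_Y = \{y^i \mid y \in Y, i \in \mathbb{Z}\}$; $M + j = \{y^{i+j} \mid y^i \in M\}$. A formula is $A \Rightarrow B$ with $A,B$ finite subsets of $\mathcal{T}_Y$; a theory is a set of formulas. Deduction rules (for arbitrary finite $A,B,C,D \subseteq \mathcal{T}_Y$, $i \in \mathbb{Z}$): (Ax) infer $A \cup B \Rightarrow A$; (Cut) from $A \Rightarrow B$ and $B \cup C \Rightarrow D$ infer $A \cup C \Rightarrow D$; (Shf) from $A \Rightarrow B$ infer $A+i \Rightarrow B+i$. $\Sigma \vdash A \Rightarrow B$ means there is a finite sequence of formulas ending with $A \Rightarrow B$ in which each member is in $\Sigma$ or is the conclusion of one of these rules applied to earlier members. *)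

From HB Require Import structures.
From mathcomp Require Import all_boot all_order all_algebra.
From mathcomp Require Import finmap.
Set Implicit Arguments. Unset Strict Implicit. Unset Printing Implicit Defensive.
Import GRing.Theory.
Local Open Scope fset_scope.

(* Terms y^i are pairs (y, i) with y : Y and i : int. *)
Definition term (Y : finType) := (Y * int)%type.

Definition shiftset (Y : finType) (j : int) (M : {fset term Y}) : {fset term Y} :=
  [fset ((x.1, (x.2 + j)%R) : term Y) | x in M].

(* A formula A => B is a pair (A, B) of finite sets of terms. *)
Definition formula (Y : finType) := ({fset term Y} * {fset term Y})%type.

Definition theory (Y : finType) := formula Y -> Prop.

Definition ax_inst (Y : finType) (f : formula Y) : Prop :=
  exists A B : {fset term Y}, f = (A `|` B, A).

Definition cut_inst (Y : finType) (p1 p2 f : formula Y) : Prop :=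
  exists A B C D : {fset term Y},
    [/\ p1 = (A, B), p2 = (B `|` C, D) & f = (A `|` C, D)].

Definition shf_inst (Y : finType) (p f : formula Y) : Prop :=
  exists (A B : {fset term Y}) (i : int),
    p = (A, B) /\ f = (shiftset i A, shiftset i B).

Definition is_proof_seq (Y : finType) (Sigma : theory Y) (s : seq (formula Y)) : Prop :=
  forall k, (k < size s)%N ->
    let f := nth (fset0, fset0) s k in
    [\/ Sigma f,
        ax_inst f,
        (exists i j, [/\ (i < k)%N, (j < k)%N &
                       cut_inst (nth (fset0, fset0) s i) (nth (fset0, fset0) s j) f])
      | (exists i, (i < k)%N /\ shf_inst (nth (fset0, fset0) s i) f)].

Definition derives (Y : finType) (Sigma : theory Y) (f : formula Y) : Prop :=
  exists s : seq (formula Y), is_proof_seq Sigma s /\ s <> [::] /\ last (fset0, fset0) s = f.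

Definition add_formula (Y : finType) (Sigma : theory Y) (g : formula Y) : theory Y :=
  fun f => Sigma f \/ f = g.

(** A derivation from [Sigma] plus the fact [∅ ⇒ A] can be turned into a
    derivation from [Sigma] alone by carrying, in every antecedent, the union
    of the shifted copies of [A] that the original derivation used: uses of
    [∅ ⇒ A] become instances of (Ax), (Cut) merges the two unions and (Shf)
    shifts the union.  Conversely every [∅ ⇒ A + i] is derivable from
    [∅ ⇒ A] by (Shf), their union by (Ax) and (Cut), and one more (Cut) with
    [⋃ (A + i_m) ⇒ B] yields [∅ ⇒ B]. *)

From HB Require Import structures.
From mathcomp Require Import all_boot all_order all_algebra.
From mathcomp Require Import finmap.
Set Implicit Arguments. Unset Strict Implicit. Unset Printing Implicit Defensive.
Local Open Scope fset_scope.
Import GRing.Theory.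

Section Shifts.
Variable Y : finType.
Implicit Types (M N : {fset term Y}) (i j : int).

Lemma in_shiftset i M (x : term Y) :
  (x \in shiftset i M) = ((x.1, (x.2 - i)%R) \in M).
Proof.
apply/imfsetP/idP => [[y yM ->]|xM] /=; first by rewrite addrK -surjective_pairing.
by exists (x.1, (x.2 - i)%R); rewrite //= subrK -surjective_pairing.
Qed.

Lemma shiftsetU i M N : shiftset i (M `|` N) = shiftset i M `|` shiftset i N.
Proof. by apply/fsetP=> x; rewrite !(in_shiftset, inE). Qed.

Lemma shiftset0 i : shiftset i (fset0 : {fset term Y}) = fset0.
Proof. by apply/fsetP=> x; rewrite !(in_shiftset, inE). Qed.

Lemma shift0set M : shiftset 0 M = M.
Proof. by apply/fsetP=> x; rewrite in_shiftset subr0 -surjective_pairing. Qed.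

Lemma shiftsetD i j M : shiftset i (shiftset j M) = shiftset (j + i)%R M.
Proof. by apply/fsetP=> x; rewrite !in_shiftset /= (addrC j) opprD addrA. Qed.

Definition shift_cover (A : {fset term Y}) (s : seq int) : {fset term Y} :=
  \big[fsetU/fset0]_(i <- s) shiftset i A.

Lemma shift_cover_cat A s1 s2 :
  shift_cover A (s1 ++ s2) = shift_cover A s1 `|` shift_cover A s2.
Proof. exact: big_cat. Qed.

Lemma shiftset_cover i A s :
  shiftset i (shift_cover A s) = shift_cover A [seq (j + i)%R | j <- s].
Proof.
rewrite /shift_cover (big_morph _ (shiftsetU i) (shiftset0 i)) big_map.
by apply: eq_bigr => j _; rewrite shiftsetD.
Qed.

End Shifts.

Section Derivability.
Variables (Y : finType) (Sigma : theory Y).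
Implicit Types (f : formula Y) (s t : seq (formula Y)).

Inductive derivable : formula Y -> Prop :=
| derivable_hyp f : Sigma f -> derivable f
| derivable_ax X Z : derivable (X `|` Z, X)
| derivable_cut P Q C D :
    derivable (P, Q) -> derivable (Q `|` C, D) -> derivable (P `|` C, D)
| derivable_shf P Q i :
    derivable (P, Q) -> derivable (shiftset i P, shiftset i Q).

Arguments derivable_cut {P Q C D}.

Local Notation nth0 := (nth (fset0, fset0)).

Definition justified_at s k f : Prop :=
  [\/ Sigma f, ax_inst f,
      (exists i j, [/\ (i < k)%N, (j < k)%N & cut_inst (nth0 s i) (nth0 s j) f])
    | (exists i, (i < k)%N /\ shf_inst (nth0 s i) f)].

Lemma is_proof_seqE s :
  is_proof_seq Sigma s = forall k, (k < size s)%N -> justified_at s k (nth0 s k).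
Proof. by []. Qed.

Lemma justified_at_reindex s t k k' (g : nat -> nat) f :
  (forall i, (i < k)%N -> (g i < k')%N /\ nth0 t (g i) = nth0 s i) ->
  justified_at s k f -> justified_at t k' f.
Proof.
move=> gP [hf|hf|[i [j [ik jk hf]]]|[i [ik hf]]]; [exact: Or41|exact: Or42| |].
- apply: Or43; exists (g i), (g j).
  by case: (gP i ik) (gP j jk) => -> -> [-> ->].
- by apply: Or44; exists (g i); case: (gP i ik) => -> ->.
Qed.

Lemma is_proof_seq_rcons s f :
  is_proof_seq Sigma s -> justified_at s (size s) f ->
  is_proof_seq Sigma (rcons s f).
Proof.
have prefix k : (k <= size s)%N -> forall i, (i < k)%N ->
    (i < k)%N /\ nth0 (rcons s f) i = nth0 s i.
  by move=> ks i ik; rewrite nth_rcons (leq_trans ik ks).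
move=> sP fP; rewrite is_proof_seqE => k.
rewrite size_rcons ltnS leq_eqVlt => /orP[/eqP ->|ks].
- rewrite nth_rcons ltnn eqxx; apply: (@justified_at_reindex _ _ _ _ id _ _ fP).
  exact: prefix.
- rewrite nth_rcons ks; apply: (@justified_at_reindex _ _ _ _ id _ _ (sP k ks)).
  exact/prefix/ltnW.
Qed.

Lemma is_proof_seq_cat s t :
  is_proof_seq Sigma s -> is_proof_seq Sigma t -> is_proof_seq Sigma (s ++ t).
Proof.
move=> sP tP; rewrite is_proof_seqE => k; rewrite size_cat [nth0 _ k]nth_cat.
case: (ltnP k (size s)) => [ks _|sk].
  apply: (@justified_at_reindex _ _ _ _ id _ _ (sP k ks)) => i ik.
  by rewrite nth_cat (ltn_trans ik ks).
rewrite -{1}(subnKC sk) ltn_add2l => kt.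
apply: (@justified_at_reindex _ _ _ _ (addn (size s)) _ _ (tP _ kt)) => i ik.
split; last by rewrite nth_cat ltnNge leq_addr addKn.
by rewrite -(subnKC sk) ltn_add2l.
Qed.

Lemma derives_rcons f : derives Sigma f <-> exists s, is_proof_seq Sigma (rcons s f).
Proof.
split=> [[s [sP [+ <-]]]|[s sP]]; last first.
  by exists (rcons s f); rewrite last_rcons; split=> //; case: s {sP}.
by case/lastP: s sP => // s x sP _; exists s; rewrite last_rcons.
Qed.

Lemma derivable_nth s : is_proof_seq Sigma s ->
  forall k, (k < size s)%N -> derivable (nth0 s k).
Proof.
move=> sP; elim/ltn_ind=> k IH ks.
case: (sP k ks) => [hf|[X [Z ->]]|[i [j [ik jk [P [Q [C [D [ei ej ->]]]]]]]]|].
- exact: derivable_hyp.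
- exact: derivable_ax.
- apply: (derivable_cut (Q := Q)); [rewrite -ei|rewrite -ej];
    by apply: IH; rewrite // (ltn_trans _ ks).
- move=> [i [ik [P [Q [n [ei ->]]]]]]; apply: derivable_shf; rewrite -ei.
  by apply: IH; rewrite // (ltn_trans ik ks).
Qed.

Lemma derivesP f : derives Sigma f <-> derivable f.
Proof.
split=> [/derives_rcons [s /derivable_nth]|].
  by move=> /(_ (size s)); rewrite size_rcons nth_rcons ltnn eqxx; apply.
elim=> {f} [f hf|X Z|P Q C D _ /derives_rcons [s1 P1] _ /derives_rcons [s2 P2]
            |P Q i _ /derives_rcons [s sP]]; apply/derives_rcons.
- exists [::]; apply: is_proof_seq_rcons => //; exact: Or41.
- by exists [::]; apply: is_proof_seq_rcons => //; apply: Or42; exists X, Z.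
- set t1 := rcons s1 (P, Q); set t2 := rcons s2 (Q `|` C, D).
  have t1_last : nth0 (t1 ++ t2) (size s1) = (P, Q).
    by rewrite nth_cat /t1 size_rcons ltnSn nth_rcons ltnn eqxx.
  have t2_last : nth0 (t1 ++ t2) (size t1 + size s2) = (Q `|` C, D).
    by rewrite nth_cat ltnNge leq_addr /= addKn /t2 nth_rcons ltnn eqxx.
  exists (t1 ++ t2); apply: is_proof_seq_rcons; first exact: is_proof_seq_cat.
  apply: Or43; exists (size s1), (size t1 + size s2)%N.
  rewrite t1_last t2_last size_cat /t1 /t2 !size_rcons ltn_add2l ltnSn ltn_addr //.
  by split=> //; exists P, Q, C, D.
- exists (rcons s (P, Q)); apply: is_proof_seq_rcons => //.
  apply: Or44; exists (size s); rewrite size_rcons nth_rcons ltnn eqxx.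
  by split=> //; exists P, Q, i.
Qed.

Lemma derivable_refl X : derivable (X, X).
Proof. by rewrite -{1}[X]fsetU0; apply: derivable_ax. Qed.

Lemma derivable_fsetU C X Z :
  derivable (C, X) -> derivable (C, Z) -> derivable (C, X `|` Z).
Proof.
move=> CX CZ; have := derivable_cut CX (derivable_refl (X `|` Z)).
by rewrite fsetUC => /(derivable_cut CZ); rewrite fsetUid.
Qed.

End Derivability.

Lemma derivable_sub (Y : finType) (Sigma Sigma' : theory Y) (f : formula Y) :
  (forall g, Sigma g -> Sigma' g) -> derivable Sigma f -> derivable Sigma' f.
Proof.
move=> sub; elim=> {f} [f /sub|X Z|P Q C D _ PQ _ QCD|P Q i _ PQ].
- exact: derivable_hyp.
- exact: derivable_ax.
- exact: derivable_cut PQ QCD.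
- exact: derivable_shf.
Qed.

Section AddedFact.
Variables (Y : finType) (Sigma : theory Y) (A : {fset term Y}).
Local Notation SigmaA := (add_formula Sigma (fset0, A)).

Lemma derivable_shift_cover s : derivable SigmaA (fset0, shift_cover A s).
Proof.
elim: s => [|i s IH]; first by rewrite /shift_cover big_nil; apply: derivable_refl.
rewrite /shift_cover big_cons; apply: derivable_fsetU IH.
have A_derivable : derivable SigmaA (fset0, A) by apply/derivable_hyp/or_intror.
by have := derivable_shf i A_derivable; rewrite shiftset0.
Qed.

Lemma derivable_add_fact_elim f : derivable SigmaA f ->
  exists s, derivable Sigma (f.1 `|` shift_cover A s, f.2).
Proof.
elim=> {f} [f [hf|->]|X Z|P Q C D _ [s1 PQ] _ [s2 QCD]|P Q i _ [s PQ]] /=.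
- by exists [::]; rewrite /shift_cover big_nil fsetU0 -surjective_pairing;
    apply: derivable_hyp.
- exists [:: 0%R]; rewrite /shift_cover big_seq1 shift0set fset0U.
  exact: derivable_refl.
- by exists [::]; rewrite /shift_cover big_nil fsetU0; apply: derivable_ax.
- exists (s1 ++ s2); rewrite shift_cover_cat fsetUACA.
  by apply: derivable_cut PQ _; rewrite fsetUA.
- exists [seq (j + i)%R | j <- s]; rewrite -shiftset_cover -shiftsetU.
  exact: derivable_shf.
Qed.

End AddedFact.

Theorem theorem11 (Y : finType) (HY : (0 < #|Y|)%N) (Sigma : theory Y)
    (A B : {fset term Y}) :
  derives (add_formula Sigma (fset0, A)) (fset0, B) <->
  exists s : seq int,
    derives Sigma ((\big[fsetU/fset0]_(i <- s) shiftset i A), B).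
Proof.
rewrite derivesP; split=> [/derivable_add_fact_elim [s]|[s /derivesP coverB]].
  by rewrite fset0U => coverB; exists s; apply/derivesP.
have coverB' : derivable (add_formula Sigma (fset0, A)) (shift_cover A s `|` fset0, B).
  by rewrite fsetU0; apply: derivable_sub coverB => g; left.
by have := derivable_cut (derivable_shift_cover Sigma A s) coverB'; rewrite fsetU0.
Qed.
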